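(* For all real $\alpha,\alpha',\beta,\beta'$ with $\beta'\neq0$, every integer $n\ge0$, every integer $0\le k\le n$, and every real $x$, \[ \langle-\alpha-\beta x\rangle_n=\sum_{j=0}^{n}(-1)^jS_{\alpha-\frac{\alpha'}{\beta'}\beta,\ \frac{\beta}{\beta'}}(n,j)\,\langle-\alpha'-\beta'x\rangle_j, \] \[ S_{\alpha,\beta}(n,k)=\sum_{j=k}^{n}(-1)^jS_{\alpha-\frac{\alpha'}{\beta'}\beta,\ \frac{\beta}{\beta'}}(n,j)\,S_{\alpha',\beta'}(j,k). \]
   Context: For real $a$ and integer $n\ge 1$, $\langle a\rangle_n:=a(a+1)\cdots(a+n-1)$ and $\langle a\rangle_0:=1$. For real $\alpha,\beta$ and integers $0\le k\le n$, $S_{\alpha,\beta}(n,k):=\frac{1}{k!}\sum_{j=0}^{k}(-1)^{k-j}\binom{k}{j}\langle-\alpha-\beta j\rangle_n$. *)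

From HB Require Import structures.
From mathcomp Require Import all_boot all_order all_algebra.
Set Implicit Arguments. Unset Strict Implicit. Unset Printing Implicit Defensive.
Import Order.TTheory GRing.Theory Num.Theory.
Local Open Scope ring_scope.

Definition risef {R : ringType} (a : R) (n : nat) : R :=
  \prod_(i < n) (a + i%:R).

Definition Sab {R : fieldType} (al be : R) (n k : nat) : R :=
  (k`!%:R)^-1 * \sum_(j < k.+1)
     (-1) ^+ (k - j) * ('C(k, j))%:R * risef (- al - be * j%:R) n.

From HB Require Import structures.
From mathcomp Require Import all_boot all_order all_algebra.
From mathcomp Require Import ring zify.
Import Order.TTheory GRing.Theory Num.Theory.
Local Open Scope ring_scope.

(* [S_{a,b}(n,k)] is [(Δ^k f)(0) / k!] for the polynomial [f t = <-a-bt>_n] of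
   degree at most [n], so Newton's forward-difference interpolation gives
   [<-a-bt>_n = Σ_k S_{a,b}(n,k) (t)_k] with the falling factorial
   [(t)_k = (-1)^k <-t>_k].  Since [-α-βx = -α'' - β''(α'+β'x)] for
   [α'' = α - α'β/β'] and [β'' = β/β'], taking [t = α'+β'x] gives the first
   identity; applying [Δ^k/k!] at [0] in [x] to it gives the second, the terms
   [j < k] vanishing because [Δ^k] kills polynomials of degree below [k]. *)

Section ForwardDifference.
Context {R : comPzRingType}.
Implicit Types (g h : nat -> R) (k m : nat).

(* [(Δ^k g)(0)] *)
Definition fwd_diff k g : R :=
  \sum_(j < k.+1) (-1) ^+ (k - j) * 'C(k, j)%:R * g j.

Lemma eq_fwd_diff k g h : g =1 h -> fwd_diff k g = fwd_diff k h.
Proof. by move=> gh; apply: eq_bigr => j _; rewrite gh. Qed.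

Lemma fwd_diff0 g : fwd_diff 0 g = g 0%N.
Proof. by rewrite /fwd_diff big_ord1 expr0 !mul1r. Qed.

Lemma fwd_diffB k g h :
  fwd_diff k (fun i => g i - h i) = fwd_diff k g - fwd_diff k h.
Proof. by rewrite /fwd_diff -sumrB; apply: eq_bigr => j _; ring. Qed.

Lemma fwd_diffMl k c g : fwd_diff k (fun i => c * g i) = c * fwd_diff k g.
Proof. by rewrite /fwd_diff mulr_sumr; apply: eq_bigr => j _; ring. Qed.

Lemma fwd_diff_sum k N (G : nat -> nat -> R) :
  fwd_diff k (fun i => \sum_(j < N) G j i) = \sum_(j < N) fwd_diff k (G j).
Proof.
by rewrite /fwd_diff exchange_big; apply: eq_bigr => j _; rewrite mulr_sumr.
Qed.

Lemma sum_binS k h :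
  \sum_(j < k.+2) 'C(k.+1, j)%:R * h j =
  \sum_(j < k.+1) 'C(k, j)%:R * (h j + h j.+1).
Proof.
under [RHS]eq_bigr => j _ do rewrite mulrDr.
rewrite big_split /= big_ord_recl [X in _ = X + _]big_ord_recl /= !bin0.
under eq_bigr => j _ do rewrite binS natrD mulrDl.
rewrite big_split /= big_ord_recr /= bin_small // mul0r addr0.
by rewrite addrA.
Qed.

Lemma fwd_diffE k g :
  fwd_diff k g = (-1) ^+ k * \sum_(j < k.+1) 'C(k, j)%:R * ((-1) ^+ j * g j).
Proof.
rewrite /fwd_diff mulr_sumr; apply: eq_bigr => j _.
by rewrite -signr_odd oddB ?(ltnSE (ltn_ord j)) // signr_addb !signr_odd; ring.
Qed.

Lemma fwd_diffS k g :
  fwd_diff k.+1 g = fwd_diff k (fun i => g i.+1) - fwd_diff k g.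
Proof.
rewrite !fwd_diffE (sum_binS k (fun j => (-1) ^+ j * g j)).
under eq_bigr => j _ do rewrite mulrDr.
rewrite big_split /= exprS.
have -> : \sum_(j < k.+1) 'C(k, j)%:R * ((-1) ^+ j.+1 * g j.+1) =
          - \sum_(j < k.+1) 'C(k, j)%:R * ((-1) ^+ j * g j.+1).
  by rewrite -sumrN; apply: eq_bigr => j _; rewrite exprS; ring.
ring.
Qed.

Lemma newton_fwd_diff m g :
  g m = \sum_(j < m.+1) 'C(m, j)%:R * fwd_diff j g.
Proof.
elim: m g => [|m IHm] g; first by rewrite big_ord1 bin0 mul1r fwd_diff0.
rewrite (IHm (fun i => g i.+1)) (sum_binS m (fwd_diff^~ g)).
by apply: eq_bigr => j _; rewrite fwd_diffS; congr (_ * _); ring.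
Qed.
End ForwardDifference.

Definition fallf {R : pzRingType} (x : R) (k : nat) : R := \prod_(i < k) (x - i%:R).

Lemma fallf_natr {R : pzRingType} (i k : nat) : fallf (i%:R : R) k = (i ^_ k)%:R.
Proof.
elim: k => [|k IHk]; first by rewrite /fallf big_ord0 ffactn0.
rewrite /fallf big_ord_recr /= -/(fallf _ _) IHk ffactnSr natrM.
by case: (leqP k i) => [/natrB -> // | /ffact_small ->]; rewrite !mul0r.
Qed.

Lemma fallf_risef {R : comNzRingType} (x : R) k :
  fallf x k = (-1) ^+ k * risef (- x) k.
Proof.
elim: k => [|k IHk]; first by rewrite /fallf /risef !big_ord0 mul1r.
rewrite /fallf /risef !big_ord_recr /= -/(fallf _ _) -/(risef _ _) IHk exprS.
ring.
Qed.

Section Polynomials.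
Context {R : idomainType}.
Implicit Types p : {poly R}.

Lemma size_prod_leq2 (I : finType) (F : I -> {poly R}) :
  (forall i, (size (F i) <= 2)%N) -> (size (\prod_i F i)%R <= #|I|.+1)%N.
Proof.
move=> F2; apply: leq_trans (size_poly_prod_leq _ _) _.
have : ((\sum_i size (F i)) <= \sum_(i : I) 2)%N by apply: leq_sum.
by rewrite sum_nat_const cardT; lia.
Qed.

Definition risef_poly (c d : R) n : {poly R} :=
  \prod_(i < n) (d *: 'X + (c + i%:R)%:P).

Lemma horner_risef_poly c d n t : (risef_poly c d n).[t] = risef (c + d * t) n.
Proof.
rewrite horner_prod; apply: eq_bigr => i _.
by rewrite hornerD hornerZ hornerX hornerC addrCA addrA.
Qed.

Lemma size_risef_poly c d n : (size (risef_poly c d n) <= n.+1)%N.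
Proof.
rewrite -[in X in (_ <= X.+1)%N](card_ord n); apply: size_prod_leq2 => i.
rewrite (leq_trans (size_polyD _ _)) // geq_max (leq_trans (size_polyC_leq1 _)) //.
by rewrite (leq_trans (size_scale_leq _ _)) ?size_polyX.
Qed.

Lemma size_comp_XaddC_sub p k :
  (size p <= k.+1)%N -> (size (p \Po ('X + 1%:P) - p)%R <= k)%N.
Proof.
move=> sp; apply/leq_sizeP => j kj; rewrite coefB.
have size_shift : size (p \Po ('X + 1%:P)) = size p.
  by rewrite size_comp_poly2 // size_XaddC.
have [pj|jp] := leqP (size p) j; first by rewrite !nth_default ?size_shift // subr0.
have -> : j = (size p).-1 by lia.
rewrite -/(lead_coef p) -size_shift -/(lead_coef _) lead_coef_comp ?size_XaddC //.
by rewrite lead_coefXaddC expr1n mulr1 subrr.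
Qed.

Lemma fwd_diff_poly_eq0 p k :
  (size p <= k)%N -> fwd_diff k (fun i => p.[i%:R]) = 0.
Proof.
elim: k p => [|k IHk] p sp.
  by move: sp; rewrite leqn0 size_poly_eq0 => /eqP ->; rewrite fwd_diff0 horner0.
rewrite fwd_diffS -fwd_diffB -(IHk _ (size_comp_XaddC_sub _ _ sp)).
apply: eq_fwd_diff => i.
by rewrite hornerD hornerN horner_comp !hornerE natr1.
Qed.

End Polynomials.

Section NewtonInterpolation.
Context {R : numFieldType}.
Implicit Types p q : {poly R}.

Lemma poly_eq_on_nat p q m :
    (size p <= m.+1)%N -> (size q <= m.+1)%N ->
    (forall i, (i <= m)%N -> p.[i%:R] = q.[i%:R]) -> p = q.
Proof.
move=> sp sq pq; apply/eqP; rewrite -subr_eq0; apply/eqP.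
apply: (@roots_geq_poly_eq0 _ _ [seq i%:R | i <- iota 0 m.+1]).
- apply/allP => _ /mapP[i + ->]; rewrite mem_iota add0n ltnS => /andP[_ im].
  by rewrite /root hornerD hornerN pq // subrr.
- by rewrite map_inj_uniq ?iota_uniq // => i j /eqP; rewrite eqr_nat => /eqP.
- rewrite size_map size_iota (leq_trans (size_polyD _ _)) //.
  by rewrite size_polyN geq_max sp.
Qed.

Lemma newton_poly p m x : (size p <= m.+1)%N ->
  p.[x] = \sum_(k < m.+1)
            (k`!%:R)^-1 * fwd_diff k (fun i => p.[i%:R]) * fallf x k.
Proof.
move=> sp.
pose N := \sum_(k < m.+1) ((k`!%:R)^-1 * fwd_diff k (fun i => p.[i%:R]))
            *: \prod_(i < k) ('X - i%:R%:P).
have horner_N y : N.[y] = \sum_(k < m.+1)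
    (k`!%:R)^-1 * fwd_diff k (fun i => p.[i%:R]) * fallf y k.
  rewrite horner_sum; apply: eq_bigr => k _; rewrite hornerZ horner_prod.
  by congr (_ * _); apply: eq_bigr => i _; rewrite hornerXsubC.
rewrite -horner_N; congr (_.[x]); apply: (@poly_eq_on_nat _ _ m sp).
  apply: (big_ind (fun r : {poly R} => size r <= m.+1)%N).
  - by rewrite size_poly0.
  - by move=> r s rm sm; rewrite (leq_trans (size_polyD _ _)) // geq_max rm.
  move=> k _; rewrite (leq_trans (size_scale_leq _ _)) //.
  have := size_prod_leq2 _ (fun i : 'I_k => 'X - i%:R%:P : {poly R})
            (fun i => eq_leq (size_XsubC _)).
  by rewrite card_ord => /leq_trans; apply.
move=> i im; rewrite horner_N (newton_fwd_diff i (fun j => p.[j%:R])).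
pose F k := 'C(i, k)%:R * fwd_diff k (fun j => p.[j%:R]).
rewrite (big_ord_widen m.+1 F (im : (i < m.+1)%N)) big_mkcond.
apply: eq_bigr => k _; rewrite /F fallf_natr -bin_ffact natrM.
have kfact_neq0 : (k`!%:R : R) != 0 by rewrite pnatr_eq0 -lt0n fact_gt0.
case: ifP => [_ | /negbT]; first by field.
by rewrite -leqNgt => /bin_small ->; rewrite !mul0r mulr0.
Qed.

End NewtonInterpolation.

Section Sab.
Context {R : numFieldType}.
Implicit Types a b : R.

Lemma Sab_fwd_diff a b n k :
  Sab a b n k =
  (k`!%:R)^-1 * fwd_diff k (fun i => (risef_poly (- a) (- b) n).[i%:R]).
Proof. by congr (_ * _); apply: eq_bigr => i _; rewrite horner_risef_poly mulNr. Qed.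

Lemma Sab_eq0 a b n k : (n < k)%N -> Sab a b n k = 0.
Proof.
move=> nk; rewrite Sab_fwd_diff fwd_diff_poly_eq0 ?mulr0 //.
exact: leq_trans (size_risef_poly _ _ _) nk.
Qed.

Lemma risef_Sab_expansion a b n t :
  risef (- a - b * t) n = \sum_(k < n.+1) Sab a b n k * fallf t k.
Proof.
rewrite -mulNr -horner_risef_poly (newton_poly _ _ _ (size_risef_poly _ _ _)).
by apply: eq_bigr => k _; rewrite Sab_fwd_diff.
Qed.

Lemma Sab_of_risef_expansion {a b a' b' n} {c : nat -> R} :
    (forall x, risef (- a - b * x) n =
               \sum_(j < n.+1) c j * risef (- a' - b' * x) j) ->
  forall k, Sab a b n k = \sum_(j < n.+1) c j * Sab a' b' j k.
Proof.
move=> expand k.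
have -> : Sab a b n k =
  (k`!%:R)^-1 * fwd_diff k (fun i => risef (- a - b * i%:R) n) by [].
under eq_fwd_diff => i do rewrite expand.
rewrite (fwd_diff_sum k n.+1 (fun j i => c j * risef (- a' - b' * i%:R) j)).
rewrite mulr_sumr.
by apply: eq_bigr => j _; rewrite fwd_diffMl mulrCA.
Qed.

End Sab.

Theorem mainTheorem15 (R : realFieldType) (al al' be be' : R) (hbe' : be' != 0)
  (n : nat) :
  (forall x : R,
     risef (- al - be * x) n =
     \sum_(j < n.+1) (-1) ^+ j * Sab (al - al' / be' * be) (be / be') n j
                     * risef (- al' - be' * x) j) /\
  (forall k : nat, (k <= n)%N ->
     Sab al be n k =
     \sum_(k <= j < n.+1) (-1) ^+ j * Sab (al - al' / be' * be) (be / be') n j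
                          * Sab al' be' j k).
Proof.
pose c j := (-1) ^+ j * Sab (al - al' / be' * be) (be / be') n j.
have expand x :
    risef (- al - be * x) n = \sum_(j < n.+1) c j * risef (- al' - be' * x) j.
  have -> : - al - be * x =
            - (al - al' / be' * be) - be / be' * (al' + be' * x) by field.
  rewrite risef_Sab_expansion; apply: eq_bigr => j _.
  by rewrite fallf_risef opprD mulrCA mulrA.
split=> [|k kn]; first exact: expand.
rewrite (Sab_of_risef_expansion expand).
rewrite -(big_mkord xpredT (fun j => c j * Sab al' be' j k)).
rewrite (big_cat_nat (leq0n k) (leqW kn)) /=.
rewrite big1_seq ?add0r // => j; rewrite mem_index_iota => /andP[_ jk].
by rewrite Sab_eq0 ?mulr0.
Qed.
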